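(* Assume $X$ satisfies condition (P). For all $x,w\in W_c$ with $x<w$, $$L_{x,w}=q^{(\ell(x)-\ell(w))/2}\sum(-1)^k\prod_{i=1}^{k+1}P_{x_{i-1},x_i},$$ where the sum runs over all chains $x=x_0<x_1<\cdots<x_{k+1}=w$ in $W$ with $0\le k\le\ell(x,w)-1$ and $x_i\notin W_c$ for $1\le i\le k$.
   Context: Let $X$ be a Coxeter graph with Coxeter system $(W,S)$, length function $\ell$, Bruhat order $\le$, identity $e$; write $\varepsilon_w=(-1)^{\ell(w)}$ and $\ell(x,w)=\ell(w)-\ell(x)$. An element of $W$ is fully commutative if any two of its reduced expressions are related by a sequence of moves $ss'\leftrightarrow s's$ with $s,s'\in S$ commuting; $W_c$ denotes the set of fully commutative elements, $[x,w]_c=\{y\in W_c:x\le y\le w\}$ and $(x,w)_c=\{y\in W_c:x<y<w\}$. $\mathcal H$ is the Hecke algebra of $W$ over $\mathcal A=\mathbb Z[q^{1/2},q^{-1/2}]$ with basis $\{T_w\}_{w\in W}$ and multiplication $T_wT_s=T_{ws}$ if $\ell(ws)>\ell(w)$, $T_wT_s=qT_{ws}+(q-1)T_w$ if $\ell(ws)<\ell(w)$. $J$ is the two-sided ideal generated by the elements $\sum_{w\in\langle s,s'\rangle}T_w$ for all pairs of non-commuting $s,s'\in S$ such that $ss'$ has finite order; $TL(X)=\mathcal H/J$, $\sigma:\mathcal H\to TL(X)$ the projection, $t_w=\sigma(T_w)$. $\{t_w:w\in W_c\}$ is an $\mathcal A$-basis of $TL(X)$; for $w\in W$ the polynomials $D_{x,w}\in\mathbb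 Z[q]$ ($x\in W_c$) are defined by $t_w=\sum_{x\in W_c,\,x\le w}D_{x,w}t_x$, with $D_{x,w}=0$ if $x\not\le w$ (so $D_{x,w}=\delta_{x,w}$ when $w\in W_c$). Let $\iota$ be the ring involution of $\mathcal H$ with $\iota(q^{1/2})=q^{-1/2}$, $\iota(T_w)=(T_{w^{-1}})^{-1}$; it preserves $J$ and so induces an involution of $TL(X)$. $R_{x,w}$ are the $R$-polynomials, defined by $(T_{w^{-1}})^{-1}=\varepsilon_wq^{-\ell(w)}\sum_{x\le w}\varepsilon_xR_{x,w}T_x$, and $P_{x,w}$ are the Kazhdan–Lusztig polynomials, so that $C'_w=q^{-\ell(w)/2}\sum_{x\le w}P_{x,w}T_x$ is $\iota$-invariant, $P_{w,w}=1$, $\deg P_{x,w}\le(\ell(x,w)-1)/2$ for $x<w$. For $w\in W_c$, the polynomials $a_{y,w}\in\mathbb Z[q]$ ($y\in W_c$) are defined by $\iota(t_w)=(t_{w^{-1}})^{-1}=q^{-\ell(w)}\sum_{y\in W_c,\,y\le w}a_{y,w}t_y$, $a_{y,w}=0$ if $y\not\le w$. Let $p\mapsto\overline p$ be the ring involution of $\mathbb Z[q^{1/2},q^{-1/2}]$ with $q^{1/2}\mapsto q^{-1/2}$. For $w\in W_c$, $\{L_{x,w}\}_{x\in W_c}$ is the unique family in $\mathbb Z[q^{-1/2}]$ with $L_{x,w}=0$ if $x\not\le w$, $L_{w,w}=1$, $L_{x,w}\in q^{-1/2}\mathbb Z[q^{-1/2}]$ if $x<w$, and $L_{x,w}=\sum_{y\in[x,w]_c}q^{(\ell(x)-\ell(y))/2}a_{x,y}\,\overline{L_{y,w}}$;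 set $c_w=\sum_{x\in W_c,\,x\le w}q^{-\ell(x)/2}L_{x,w}t_x$. Condition (P) on $X$: $\sigma(C'_w)=c_w$ for all $w\in W_c$ and $\sigma(C'_w)=0$ for all $w\in W\setminus W_c$. (For finite irreducible or affine $X$, this holds exactly when $X$ has no vertex adjacent to three or more vertices and $X\neq\widetilde F_4$; in particular types $A$, $B$, $F_4$, $H_3$, $H_4$, $I_2(m)$.) *)

From HB Require Import structures.
From mathcomp Require Import all_boot all_order all_algebra.
From Stdlib Require Import Relations ClassicalEpsilon.
Set Implicit Arguments. Unset Strict Implicit. Unset Printing Implicit Defensive.
Import GRing.Theory.
Local Open Scope ring_scope.

(* fsum p F = sum of F x over the x with p x, computed along a         *)
(* duplicate-free enumeration of {x | p x} (chosen by epsilon); all    *)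
(* sets summed over below are finite, so this is the usual sum.        *)
Definition enumerates (T : eqType) (l : seq T) (p : T -> Prop) : Prop :=
  uniq l /\ forall x, x \in l <-> p x.

Definition fsum (T : eqType) (V : nmodType) (p : T -> Prop) (F : T -> V) : V :=
  \sum_(x <- epsilon (inhabits [::]) (fun l => enumerates l p)) F x.

(* cS = vertex set S of the Coxeter graph X, cm s t = m(s,t) with the  *)
(* convention cm s t = 0 meaning m(s,t) = infinity; cW is a group with *)
(* generators cgen s, required below to be the group presented by X.   *)
Record coxeter_datum := CoxeterDatum {
  cS : finType;
  cm : cS -> cS -> nat;
  cW : eqType;
  cmul : cW -> cW -> cW;
  cinv : cW -> cW;
  cone : cW;
  cgen : cS -> cW }.

Definition group_axioms (G : Type) (mul : G -> G -> G) (inv : G -> G) (one : G) : Prop :=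
  (forall x y z, mul x (mul y z) = mul (mul x y) z) /\
  (forall x, mul one x = x) /\ (forall x, mul x one = x) /\
  (forall x, mul (inv x) x = one) /\ (forall x, mul x (inv x) = one).

Definition gpow (G : Type) (mul : G -> G -> G) (one : G) (x : G) (n : nat) : G :=
  iter n (mul x) one.

Section Cox.
Variable C : coxeter_datum.
Local Notation S := (cS C).
Local Notation W := (cW C).

Definition coxeter_matrix : Prop :=
  (forall s : S, cm s s = 1%N) /\ (forall s t : S, cm s t = cm t s) /\
  (forall s t : S, s != t -> cm s t != 1%N).

Definition word_prod (ws : seq S) : W := foldr (fun s acc => cmul (cgen s) acc) (cone C) ws.

Definition coxeter_system : Prop :=
  coxeter_matrix /\
  group_axioms (@cmul C) (@cinv C) (cone C) /\
  (forall s t : S, cm s t != 0%N ->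
     gpow (@cmul C) (cone C) (cmul (cgen s) (cgen t)) (cm s t) = cone C) /\
  (forall w, exists ws, w = word_prod ws) /\
  (forall (G : Type) (mulG : G -> G -> G) (invG : G -> G) (oneG : G) (f : S -> G),
     group_axioms mulG invG oneG ->
     (forall s t : S, cm s t != 0%N -> gpow mulG oneG (mulG (f s) (f t)) (cm s t) = oneG) ->
     exists phi : W -> G, (forall x y, phi (cmul x y) = mulG (phi x) (phi y)) /\
                          (forall s : S, phi (cgen s) = f s)).

Definition is_length (w : W) (n : nat) : Prop :=
  (exists ws, word_prod ws = w /\ size ws = n) /\
  (forall ws, word_prod ws = w -> (n <= size ws)%N).

Definition len (w : W) : nat := epsilon (inhabits 0%N) (is_length w).

Definition reflection (t : W) : Prop :=
  exists u s, t = cmul (cmul u (cgen s)) (cinv u).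

Definition bruhat_step (x y : W) : Prop :=
  exists t, reflection t /\ y = cmul x t /\ (len x < len y)%N.

Definition bruhat : W -> W -> Prop := clos_refl_trans W bruhat_step.
Definition bruhat_lt (x y : W) : Prop := bruhat x y /\ x <> y.

Definition reduced_expr (w : W) (ws : seq S) : Prop :=
  word_prod ws = w /\ size ws = len w.

Definition comm_move (ws1 ws2 : seq S) : Prop :=
  exists (u1 u2 : seq S) (s s' : S),
    ws1 = u1 ++ [:: s; s'] ++ u2 /\ ws2 = u1 ++ [:: s'; s] ++ u2 /\
    cmul (cgen s) (cgen s') = cmul (cgen s') (cgen s).

Definition fully_commutative (w : W) : Prop :=
  forall ws1 ws2, reduced_expr w ws1 -> reduced_expr w ws2 ->
    clos_refl_trans (seq S) comm_move ws1 ws2.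

(* the parabolic subgroup <s, s'> (generators are involutions) *)
Definition in_parabolic2 (s s' : S) (u : W) : Prop :=
  exists bs : seq bool, u = word_prod (map (fun b => if b then s else s') bs).

Fixpoint strict_path (x : W) (l : seq W) : Prop :=
  match l with
  | [::] => True
  | y :: l' => bruhat_lt x y /\ strict_path y l'
  end.

End Cox.

(* The ring A = Z[q^{1/2}, q^{-1/2}], v = q^{1/2}                      *)
Section Rings.
Variables (A : comUnitRingType) (v : A).

Definition laurent_ring : Prop :=
  v \is a GRing.unit /\
  (forall a : A, exists (p : {poly int}) (n : nat),
      a = v ^- n * (map_poly (fun z : int => z%:~R) p).[v]) /\
  (forall p : {poly int}, (map_poly (fun z : int => z%:~R) p).[v] = 0 -> p = 0).

Definition evq (p : {poly int}) : A := (map_poly (fun z : int => z%:~R) p).[v ^+ 2].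
Definition evu (p : {poly int}) : A := (map_poly (fun z : int => z%:~R) p).[v^-1].

Definition is_bar (bar : A -> A) : Prop :=
  (forall a b, bar (a + b) = bar a + bar b) /\ (forall a b, bar (a * b) = bar a * bar b) /\
  bar 1 = 1 /\ bar v = v^-1.
End Rings.

Section Hecke.
Variables (C : coxeter_datum) (A : comUnitRingType) (v : A) (H : algType A)
          (T : cW C -> H).
Local Notation W := (cW C).
Local Notation q := (v ^+ 2).

Definition is_hecke : Prop :=
  T (cone C) = 1 /\
  (forall w s, (len w < len (cmul w (cgen s)))%N -> T w * T (cgen s) = T (cmul w (cgen s))) /\
  (forall w s, (len (cmul w (cgen s)) < len w)%N ->
      T w * T (cgen s) = q *: T (cmul w (cgen s)) + (q - 1) *: T w) /\
  (forall h : H, exists (l : seq W) (c : W -> A), h = \sum_(w <- l) c w *: T w) /\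
  (forall (l : seq W) (c : W -> A), uniq l -> \sum_(w <- l) c w *: T w = 0 ->
      forall w, w \in l -> c w = 0).

Definition is_iota (bar : A -> A) (iota : H -> H) : Prop :=
  (forall h k, iota (h + k) = iota h + iota k) /\ (forall h k, iota (h * k) = iota h * iota k) /\
  iota 1 = 1 /\ (forall (a : A) h, iota (a *: h) = bar a *: iota h) /\
  (forall w, iota (T w) * T (cinv w) = 1 /\ T (cinv w) * iota (T w) = 1).

Definition J_generator (g : H) : Prop :=
  exists s s' : cS C,
    cmul (cgen s) (cgen s') <> cmul (cgen s') (cgen s) /\
    (exists n, (0 < n)%N /\ gpow (@cmul C) (cone C) (cmul (cgen s) (cgen s')) n = cone C) /\
    g = fsum (in_parabolic2 s s') T.

(* sigma : H -> TL(X) = H/J is the quotient map by the two-sided ideal J *)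
Definition is_TL_projection (TL : algType A) (sigma : H -> TL) : Prop :=
  (forall h k, sigma (h + k) = sigma h + sigma k) /\ (forall h k, sigma (h * k) = sigma h * sigma k) /\
  sigma 1 = 1 /\ (forall (a : A) h, sigma (a *: h) = a *: sigma h) /\
  (forall y : TL, exists h, sigma h = y) /\
  (forall h, sigma h = 0 <->
     exists l : seq ((H * H) * H),
       (forall tr, tr \in l -> J_generator tr.1.2) /\
       h = \sum_(tr <- l) tr.1.1 * tr.1.2 * tr.2).

Definition TL_basis (TL : algType A) (sigma : H -> TL) : Prop :=
  (forall y : TL, exists (l : seq W) (c : W -> A),
      (forall w, w \in l -> fully_commutative w) /\ y = \sum_(w <- l) c w *: sigma (T w)) /\
  (forall (l : seq W) (c : W -> A), uniq l -> (forall w, w \in l -> fully_commutative w) ->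
      \sum_(w <- l) c w *: sigma (T w) = 0 -> forall w, w \in l -> c w = 0).

Definition Cprime (P : W -> W -> {poly int}) (w : W) : H :=
  v ^- len w *: fsum (fun x => bruhat x w) (fun x => evq v (P x w) *: T x).

Definition is_KL (iota : H -> H) (P : W -> W -> {poly int}) : Prop :=
  (forall w, P w w = 1) /\
  (forall x w, ~ bruhat x w -> P x w = 0) /\
  (forall x w, bruhat_lt x w -> (2 * (size (P x w)).-1 < len w - len x)%N) /\
  (forall w, iota (Cprime P w) = Cprime P w).

(* the polynomials a_{y,w}: iota(t_w) = q^{-l(w)} sum_{y in W_c, y <= w} a_{y,w} t_y, *)
(* where the involution of TL(X) is induced by iota: iota(sigma h) = sigma(iota h). *)
Definition is_a (TL : algType A) (sigma : H -> TL) (iota : H -> H)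
    (a : W -> W -> {poly int}) : Prop :=
  forall w, fully_commutative w ->
    sigma (iota (T w)) =
      q ^- len w *: fsum (fun y => fully_commutative y /\ bruhat y w)
                          (fun y => evq v (a y w) *: sigma (T y)) /\
    (forall y, fully_commutative y -> ~ bruhat y w -> a y w = 0).

(* the family L_{x,w} (elements of Z[q^{-1/2}], given as polynomials in q^{-1/2}) *)
Definition is_L (bar : A -> A) (a L : W -> W -> {poly int}) : Prop :=
  forall w, fully_commutative w ->
    (forall x, fully_commutative x -> ~ bruhat x w -> L x w = 0) /\
    L w w = 1 /\
    (forall x, fully_commutative x -> bruhat_lt x w -> (L x w)`_0 = 0) /\
    (forall x, fully_commutative x ->
       evu v (L x w) =
         fsum (fun y => fully_commutative y /\ bruhat x y /\ bruhat y w)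
              (fun y => v ^ ((len x)%:Z - (len y)%:Z) * evq v (a x y) * bar (evu v (L y w)))).

Definition c_elt (TL : algType A) (sigma : H -> TL) (L : W -> W -> {poly int}) (w : W) : TL :=
  fsum (fun x => fully_commutative x /\ bruhat x w)
       (fun x => (v ^- len x * evu v (L x w)) *: sigma (T x)).

Definition condition_P (TL : algType A) (sigma : H -> TL) (P L : W -> W -> {poly int}) : Prop :=
  forall w, (fully_commutative w -> sigma (Cprime P w) = c_elt sigma L w) /\
            (~ fully_commutative w -> sigma (Cprime P w) = 0).

End Hecke.

Definition admissible_chain (C : coxeter_datum) (x w : cW C) (c : seq (cW C)) : Prop :=
  strict_path x (rcons c w) /\ (size c <= len w - len x - 1)%N /\
  (forall y, y \in c -> ~ fully_commutative y).

From HB Require Import structures.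
From mathcomp Require Import all_boot all_order all_algebra.
From Stdlib Require Import Relations ClassicalEpsilon.
From mathcomp Require Import zify.
Set Implicit Arguments. Unset Strict Implicit. Unset Printing Implicit Defensive.
Import GRing.Theory.
Local Open Scope ring_scope.

(* Fix w in W_c, let U list the finite Bruhat interval [e, w], write        *)
(* Q(y,z) = P_{y,z}(q) and let R(y) be the signed chain sum of the theorem,  *)
(* so that the claim reads v^{-l(x)} L_{x,w} = v^{-l(w)} R(x).               *)
(* 1. Splitting off the first interior element of a chain gives              *)
(*      R(y) = Q(y,w) - sum_{y < z < w, z notin W_c} Q(y,z) R(z)             *)
(* 2. For z notin W_c, condition (P) gives sigma(C'_z) = 0, i.e.              *)
(*      t_z = - sum_{y < z} Q(y,z) t_y   (vanishing_Cprime_relation).         *)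
(* 3. Substituting these relations into sigma(C'_w) = v^{-l(w)} sum_y         *)
(*    Q(y,w) t_y removes all t_z with z notin W_c; by 1. the coefficient left *)
(*    on t_x is v^{-l(w)} R(x) (eliminate_bad, sigma_Cprime_expansion).       *)
(* 4. Condition (P) for w gives sigma(C'_w) = c_w, whose coefficient on t_x   *)
(*    is v^{-l(x)} L_{x,w}; the t_y (y in W_c) form a basis (TL_coef_eq).    *)

Definition dec (P : Prop) : bool := if excluded_middle_informative P then true else false.

Lemma decP (P : Prop) : reflect P (dec P).
Proof. by rewrite /dec; case: excluded_middle_informative => h; constructor. Qed.

Lemma fsum_seq (T : eqType) (V : nmodType) (p : T -> Prop) (F : T -> V) (l : seq T) :
  uniq l -> (forall x, p x -> x \in l) -> (forall x, x \in l -> ~ p x -> F x = 0) ->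
  fsum p F = \sum_(x <- l) F x.
Proof.
move=> l_uniq p_in_l F0.
set l0 := [seq x <- l | dec (p x)].
have l0_enum : enumerates l0 p.
  split; first by rewrite filter_uniq.
  move=> x; rewrite mem_filter; split; first by case/andP=> /decP.
  by move=> px; rewrite (p_in_l _ px) andbT; apply/decP.
have := epsilon_spec (inhabits [::]) (fun l => enumerates l p) (ex_intro _ l0 l0_enum).
rewrite /fsum; set e := epsilon _ _ => -[e_uniq e_enum].
have e_perm : perm_eq e l0.
  apply: uniq_perm => //; first by case: l0_enum.
  move=> x; apply/idP/idP => h; first exact/(proj2 l0_enum x)/e_enum.
  exact/e_enum/(proj2 l0_enum x).
rewrite (perm_big _ e_perm) /l0 big_filter big_mkcond /=.
by apply: eq_big_seq => x xl; case: decP => // np; rewrite F0.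
Qed.

Section BruhatIntervals.
Variable C : coxeter_datum.
Local Notation W := (cW C).

Lemma bruhat_len (x y : W) : bruhat x y -> (len x <= len y)%N.
Proof.
elim=> [a b [t [_ [_ h]]]|a|a b c _ h1 _ h2]; [exact: ltnW|by []|exact: leq_trans h1 h2].
Qed.

Lemma bruhat_lt_len (x y : W) : bruhat_lt x y -> (len x < len y)%N.
Proof.
case=> /(clos_rt_rt1n _ _ _ _) h ne.
inversion h as [|y0 z [t [_ [_ lt_xy0]]] h']; first by subst.
exact: leq_trans lt_xy0 (bruhat_len (clos_rt1n_rt _ _ _ _ h')).
Qed.

Lemma len_spec (w : W) : (exists ws, w = word_prod ws) -> is_length w (len w).
Proof.
move=> [ws ->]; apply: epsilon_spec.
have has_word : exists n, dec (exists u, word_prod u = word_prod ws /\ size u = n).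
  by exists (size ws); apply/decP; exists ws.
case: (ex_minnP has_word) => n /decP word_n n_min.
by exists n; split=> // u eu; apply: n_min; apply/decP; exists u.
Qed.

Fixpoint words (n : nat) : seq (seq (cS C)) :=
  if n is n'.+1 then [::] :: [seq s :: u | s <- enum (cS C), u <- words n'] else [:: [::]].

Lemma mem_words n ws : (size ws <= n)%N -> ws \in words n.
Proof.
elim: n ws => [|n IH] [|s ws] //= h.
rewrite inE; apply/orP; right; apply/allpairsP; exists (s, ws) => /=.
by rewrite mem_enum IH.
Qed.

(* Lower Bruhat intervals are finite: every z <= w is the product of a  *)
(* word of size len z <= len w.                                           *)
Lemma bruhat_interval_finite (gen : forall z : W, exists ws, z = word_prod ws) (w : W) :
  exists U : seq W, uniq U /\ forall z, z \in U <-> bruhat z w.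
Proof.
exists (undup [seq z <- map (@word_prod C) (words (len w)) | dec (bruhat z w)]).
split=> [|z]; first exact: undup_uniq.
rewrite mem_undup mem_filter; split; first by case/andP=> /decP.
move=> zw; apply/andP; split; first exact/decP.
have [[ws [z_ws size_ws]] _] := len_spec (gen z).
by rewrite -z_ws map_f // mem_words // size_ws bruhat_len.
Qed.

End BruhatIntervals.

Definition bruhat_ltb (C : coxeter_datum) (y z : cW C) : bool := dec (bruhat_lt y z).
Definition non_fcb (C : coxeter_datum) (z : cW C) : bool := ~~ dec (fully_commutative z).

Lemma uniq_flatten_cons (T : eqType) (s : seq T) (f : T -> seq (seq T)) :
  uniq s -> (forall z, uniq (f z)) -> uniq (flatten [seq map (cons z) (f z) | z <- s]).
Proof.
elim: s => [//|z s IH] /= /andP[z_notin_s s_uniq] f_uniq.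
have cons_inj : injective (cons z) by move=> a b [].
rewrite cat_uniq IH // andbT (map_inj_uniq cons_inj) f_uniq /=.
apply/hasP => -[c /flatten_mapP [z' z's /mapP [c' _ ->]] /mapP [c'' _ [ez _]]].
by move: z_notin_s; rewrite -ez z's.
Qed.

Section Chains.
Variables (C : coxeter_datum) (w : cW C).
Local Notation W := (cW C).

(* A strict chain x < c_1 < ... < c_k < w forces x < w and has at most  *)
(* l(w) - l(x) - 1 interior elements; so the length bound in            *)
(* admissible_chain is automatic.                                        *)
Lemma strict_path_len (x : W) (c : seq W) :
  strict_path x (rcons c w) -> bruhat_lt x w /\ (len x + size c < len w)%N.
Proof.
elim: c x => [|z c IH] x /=; first by case=> xw _; rewrite addn0; split=> //; exact: bruhat_lt_len.
case=> xz /IH [[zw z_ne_w] size_c]; have len_xz := bruhat_lt_len xz.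
split; last by rewrite addnS -addSn; exact: leq_ltn_trans (leq_add len_xz (leqnn _)) size_c.
split=> [|x_eq_w]; first exact: rt_trans (proj1 xz) zw.
by move: len_xz size_c; rewrite x_eq_w; lia.
Qed.

Variable U : seq W.
Hypothesis U_uniq : uniq U.
Hypothesis U_interval : forall z, z \in U <-> bruhat z w.

Fixpoint chains (n : nat) (x : W) : seq (seq W) :=
  (if bruhat_ltb x w then [:: [::]] else [::]) ++
  (if n is n'.+1 then
     flatten [seq map (cons z) (chains n' z) | z <- [seq z <- U | bruhat_ltb x z && non_fcb z]]
   else [::]).

Lemma mem_chains n x c : c \in chains n x <->
  [/\ strict_path x (rcons c w), forall y, y \in c -> ~ fully_commutative y & (size c <= n)%N].
Proof.
elim: n x c => [|n IH] x [|z c] /=; rewrite ?cats0 ?mem_cat /bruhat_ltb.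
- by case: decP => xw; rewrite ?inE //; split=> // -[[]].
- by case: decP; split=> // -[].
- case: decP => xw; first by split=> // _; rewrite inE eqxx.
  by split=> [/allpairsPdep [? [? []]] //|[[]]].
- have -> : (z :: c \in (if dec (bruhat_lt x w) then [:: [::]] else [::])) = false.
    by case: dec.
  split.
  + case/allpairsPdep => z' [c' []]; rewrite mem_filter => /andP [/andP [xz nfc_z] _].
    move=> /IH [path_c nfc_c size_c] [-> ->]; split=> //; first by split=> //; exact/decP.
    move=> y; rewrite inE => /orP [/eqP ->|]; last exact: nfc_c.
    by move: nfc_z; rewrite /non_fcb; case: decP.
  + case=> [[xz path_c] nfc size_c]; apply/allpairsPdep; exists z, c; split=> //.
      have zU : z \in U by apply/U_interval; exact: proj1 (proj1 (strict_path_len path_c)).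
      have non_fc_z : ~ fully_commutative z by apply: nfc; rewrite inE eqxx.
      by rewrite mem_filter zU andbT; apply/andP; split; [exact/decP | apply/negP => /decP].
    by apply/IH; split=> // y yc; apply: nfc; rewrite inE yc orbT.
Qed.

(* Distinct first elements give distinct chains, so no chain is repeated. *)
Lemma uniq_chains n x : uniq (chains n x).
Proof.
elim: n x => [|n IH] x /=; first by rewrite cats0; case: bruhat_ltb.
rewrite cat_uniq uniq_flatten_cons ?filter_uniq // andbT; case: bruhat_ltb => //=.
  by apply/hasP => -[c /allpairsPdep [z [c' [_ _ ->]]]].
by apply/hasP => -[c].
Qed.

Variables (K : comPzRingType) (Q : W -> W -> K).

Definition chain_weight (x : W) (c : seq W) : K :=
  (-1) ^+ size c * \prod_(p <- zip (x :: c) (rcons c w)) Q p.1 p.2.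

Definition chain_sum (x : W) : K := fsum (admissible_chain x w) (chain_weight x).

Lemma chain_sumE n x :
  (len w - len x - 1 <= n)%N -> chain_sum x = \sum_(c <- chains n x) chain_weight x c.
Proof.
move=> size_n; apply: fsum_seq; first exact: uniq_chains.
- by move=> c [path_c [size_c nfc]]; apply/mem_chains; split=> //; exact: leq_trans size_c size_n.
- move=> c /mem_chains [path_c nfc _] not_adm; exfalso; apply: not_adm.
  by have [_ size_c] := strict_path_len path_c; split=> //; split=> //; lia.
Qed.

Lemma chain_sum_rec x : bruhat_lt x w ->
  chain_sum x = Q x w - \sum_(z <- U | bruhat_ltb x z && non_fcb z) Q x z * chain_sum z.
Proof.
move=> xw; have len_xw := bruhat_lt_len xw.
have size_n : (len w - len x - 1 <= len w)%N by rewrite -subnDA leq_subr.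
rewrite (chain_sumE size_n); case E : (len w) len_xw size_n => [//|n] _ _ /=.
have -> : bruhat_ltb x w by exact/decP.
rewrite big_cat big_seq1 /chain_weight /= big_cons big_nil expr0 mul1r mulr1.
congr (_ + _); rewrite big_flatten big_map big_filter -sumrN.
apply: eq_big => // z /andP [xz _].
rewrite big_map (chain_sumE (n := n)) ?mulr_sumr; last by rewrite E; lia.
rewrite -sumrN; apply: eq_bigr => c _.
by rewrite /chain_weight /= big_cons exprS /= mulN1r mulNr mulrCA.
Qed.

End Chains.

Section Elimination.
Variables (I : eqType) (K : comPzRingType) (M : lmodType K).
Variables (U : seq I) (t : I -> M) (lt : rel I) (bad : pred I).
Variables (Q : I -> I -> K) (w : I) (r : I -> K).

Hypothesis bad_relation :
  forall z, z \in U -> bad z -> \sum_(y <- U | lt y z) Q y z *: t y = - t z.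
Hypothesis r_rec :
  forall y, y \in U -> bad y -> r y = Q y w - \sum_(z <- U | lt y z && bad z) Q y z * r z.

Lemma eliminate_bad :
  \sum_(y <- U) Q y w *: t y =
  \sum_(y <- U | ~~ bad y) (Q y w - \sum_(z <- U | lt y z && bad z) Q y z * r z) *: t y.
Proof.
set rest := fun y => \sum_(z <- U | lt y z && bad z) Q y z * r z.
have rest_bad : \sum_(y <- U) rest y *: t y = - \sum_(z <- U | bad z) r z *: t z.
  under eq_bigr => y _ do rewrite /rest scaler_suml big_mkcond.
  rewrite exchange_big -sumrN [RHS]big_mkcond /=; apply: eq_big_seq => z zU.
  case: (boolP (bad z)) => [bad_z|_]; last by apply: big1 => y _; rewrite andbF.
  rewrite -scalerN -(bad_relation zU bad_z) scaler_sumr [RHS]big_mkcond.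
  by apply: eq_bigr => y _; rewrite andbT; case: (lt y z); rewrite // scalerA mulrC.
have bad_part : \sum_(y <- U | bad y) (Q y w - rest y) *: t y = \sum_(z <- U | bad z) r z *: t z.
  rewrite -[LHS]big_filter -[RHS]big_filter; apply: eq_big_seq => y.
  by rewrite mem_filter => /andP [bad_y yU]; rewrite r_rec.
rewrite [LHS](_ : _ = \sum_(y <- U) (Q y w - rest y) *: t y + \sum_(y <- U) rest y *: t y).
  by rewrite rest_bad (bigID bad) /= bad_part addrAC subrr add0r.
by rewrite -big_split /=; apply: eq_bigr => y _; rewrite -scalerDl subrK.
Qed.
End Elimination.

Section TemperleyLiebRelations.
Variables (C : coxeter_datum) (A : comUnitRingType) (v : A) (H : algType A).
Variables (T : cW C -> H) (TL : algType A) (sigma : H -> TL).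
Local Notation W := (cW C).

Lemma sigma_lincomb (sigma_proj : is_TL_projection T sigma) (l : seq W) (F : W -> A) :
  sigma (\sum_(y <- l) F y *: T y) = \sum_(y <- l) F y *: sigma (T y).
Proof.
have [sigmaD [_ [_ [sigmaZ _]]]] := sigma_proj.
have sigma0 : sigma 0 = 0 by apply/eqP; rewrite -(subrr (sigma 0)) -{2}(addr0 0) sigmaD addrK.
by elim: l => [|y l IH]; rewrite ?big_nil // !big_cons sigmaD sigmaZ IH.
Qed.

Lemma TL_coef_eq (basis : TL_basis T sigma) (l : seq W) (f g : W -> A) :
  uniq l -> (forall y, y \in l -> fully_commutative y) ->
  \sum_(y <- l) f y *: sigma (T y) = \sum_(y <- l) g y *: sigma (T y) ->
  forall y, y \in l -> f y = g y.
Proof.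
move=> l_uniq l_fc /eqP; rewrite -subr_eq0 -sumrB.
under eq_bigr => y _ do rewrite -scalerBl.
by move/eqP/(proj2 basis _ _ l_uniq l_fc) => coef0 y /coef0 /eqP; rewrite subr_eq0 => /eqP.
Qed.

Variable P : W -> W -> {poly int}.
Hypothesis P_support : forall y z, ~ bruhat y z -> P y z = 0.

Lemma sigma_Cprime (sigma_proj : is_TL_projection T sigma) (U : seq W) (z : W) :
  uniq U -> (forall y, bruhat y z -> y \in U) ->
  sigma (Cprime v T P z) = v ^- len z *: \sum_(y <- U) evq v (P y z) *: sigma (T y).
Proof.
have [_ [_ [_ [sigmaZ _]]]] := sigma_proj.
move=> U_uniq U_below; rewrite /Cprime sigmaZ (@fsum_seq _ _ _ _ U) ?sigma_lincomb //.
by move=> y _ not_yz; rewrite P_support // /evq map_poly0 horner0 scale0r.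
Qed.

Hypothesis P_diag : forall z, P z z = 1.

Lemma vanishing_Cprime_relation (sigma_proj : is_TL_projection T sigma) (U : seq W) (z : W) :
  v \is a GRing.unit -> uniq U -> (forall y, bruhat y z -> y \in U) -> z \in U ->
  sigma (Cprime v T P z) = 0 ->
  \sum_(y <- U | bruhat_ltb y z) evq v (P y z) *: sigma (T y) = - sigma (T z).
Proof.
move=> v_unit U_uniq U_below zU; rewrite (sigma_Cprime sigma_proj U_uniq U_below) => Cz0.
have sum0 : \sum_(y <- U) evq v (P y z) *: sigma (T y) = 0.
  by rewrite -[LHS]scale1r -(mulrV (unitrX (len z) v_unit)) -scalerA Cz0 scaler0.
have diag_part : \sum_(y <- U | ~~ bruhat_ltb y z) evq v (P y z) *: sigma (T y) = sigma (T z).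
  rewrite big_mkcond (bigD1_seq z) //= /bruhat_ltb.
  have -> : dec (bruhat_lt z z) = false by case: decP => // -[].
  rewrite /= P_diag /evq -polyC1 map_polyC hornerC /= scale1r big1_seq ?addr0 //.
  move=> y /andP [y_ne_z yU].
  case: decP => //= not_yz; rewrite P_support ?/evq ?map_poly0 ?horner0 ?scale0r // => yz.
  by apply: not_yz; split=> // y_eq_z; rewrite y_eq_z eqxx in y_ne_z.
move: sum0; rewrite (bigID (fun y => bruhat_ltb y z)) /= diag_part => /eqP.
by rewrite addr_eq0 => /eqP.
Qed.

Lemma sigma_Cprime_expansion (sigma_proj : is_TL_projection T sigma) (U : seq W) (w : W) :
  v \is a GRing.unit -> uniq U -> (forall z, z \in U <-> bruhat z w) ->
  fully_commutative w ->
  (forall z, bruhat z w -> ~ fully_commutative z -> sigma (Cprime v T P z) = 0) ->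
  let Q y z := evq v (P y z) in
  sigma (Cprime v T P w) =
  \sum_(y <- U | ~~ non_fcb y)
     (v ^- len w * (Q y w - \sum_(z <- U | bruhat_ltb y z && non_fcb z) Q y z * chain_sum w Q z))
     *: sigma (T y).
Proof.
move=> v_unit U_uniq U_interval fc_w vanish Q.
have U_below z : z \in U -> forall y, bruhat y z -> y \in U.
  by move=> /U_interval zw y yz; apply/U_interval; exact: rt_trans yz zw.
rewrite (sigma_Cprime sigma_proj U_uniq (U_below w _)); last exact/U_interval/rt_refl.
rewrite (eliminate_bad (lt := @bruhat_ltb C) (bad := @non_fcb C) (Q := Q) (r := chain_sum w Q))
  => [|z zU /negP nfc_z|y yU /negP nfc_y].
- by rewrite scaler_sumr; apply: eq_bigr => y _; rewrite scalerA.
- apply: vanishing_Cprime_relation => //; first exact: U_below.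
  by apply: vanish; [exact/U_interval | move=> fc_z; apply: nfc_z; apply/decP].
- apply: (chain_sum_rec U_uniq U_interval); split; first exact/U_interval.
  by move=> y_eq_w; apply: nfc_y; rewrite y_eq_w; apply/decP.
Qed.

End TemperleyLiebRelations.

Theorem mainTheorem20
  (C : coxeter_datum) (A : comUnitRingType) (v : A) (bar : A -> A)
  (H : algType A) (T : cW C -> H) (iota : H -> H)
  (TL : algType A) (sigma : H -> TL)
  (P a L : cW C -> cW C -> {poly int}) :
  coxeter_system C ->
  laurent_ring v -> is_bar v bar ->
  is_hecke v T -> is_iota T bar iota ->
  is_TL_projection T sigma -> TL_basis T sigma ->
  is_KL v T iota P -> is_a v T sigma iota a -> is_L v bar a L ->
  condition_P v T sigma P L ->
  forall x w : cW C,
    fully_commutative x -> fully_commutative w -> bruhat_lt x w ->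
    evu v (L x w) =
      v ^ ((len x)%:Z - (len w)%:Z) *
      fsum (admissible_chain x w)
           (fun c => (-1) ^+ size c *
              \prod_(p <- zip (x :: c) (rcons c w)) evq v (P p.1 p.2)).
Proof.
move=> [_ [_ [_ [gen _]]]] [v_unit _] _ _ _ sigma_proj basis [P_diag [P_support _]] _ _ condP.
move=> x w fc_x fc_w xw.
have [U [U_uniq U_interval]] := bruhat_interval_finite gen w.
set Q := fun y z => evq v (P y z).
set R := chain_sum w Q.
set good := [seq y <- U | ~~ non_fcb y].
have mem_good y : y \in good <-> fully_commutative y /\ bruhat y w.
  rewrite mem_filter negbK; split=> [/andP [/decP fc_y /U_interval yw] | [fc_y /U_interval yU]] //.
  by rewrite yU andbT; apply/decP.
have good_fc y : y \in good -> fully_commutative y by case/mem_good.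
pose coef y := v ^- len w * (Q y w - \sum_(z <- U | bruhat_ltb y z && non_fcb z) Q y z * R z).
have sigma_Cw : sigma (Cprime v T P w) = \sum_(y <- good) coef y *: sigma (T y).
  rewrite big_filter; apply: sigma_Cprime_expansion => // z _; exact: (proj2 (condP z)).
have c_w : c_elt v T sigma L w = \sum_(y <- good) (v ^- len y * evu v (L y w)) *: sigma (T y).
  by apply: fsum_seq => [|y /mem_good|y /mem_good]; first exact: filter_uniq.
have x_good : x \in good by apply/mem_good; split; [|case: xw].
have coef_x : coef x = v ^- len x * evu v (L x w).
  apply: (TL_coef_eq (f := coef) (g := fun y => v ^- len y * evu v (L y w)) 
           basis _ good_fc _ x_good).
    exact: filter_uniq.
  by rewrite -sigma_Cw -c_w (proj1 (condP w) fc_w).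
rewrite /coef -(chain_sum_rec U_uniq U_interval Q xw) -/R in coef_x.
change (evu v (L x w) = v ^ ((len x)%:Z - (len w)%:Z) * R x).
rewrite exprzDr // -exprnN -mulrA coef_x mulrA mulrV ?mul1r //; exact: unitrX.
Qed.
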